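(* Let $\alpha$ and $\beta$ be 5-cycles in the symmetric group $S_6$ such that $\mathrm{Supp}(\alpha) \neq \mathrm{Supp}(\beta)$. Then one of the permutations $\alpha\beta$, $\alpha\beta^3$, $\alpha^2\beta$ is not a 5-cycle.
   Context: Permutations act on the right and are composed left to right, i.e. $i(\alpha\beta) = (i\alpha)\beta$. $\mathrm{Supp}(\alpha)$ denotes the set of points moved by $\alpha$. The lemma is used in showing that the d-identity $(x_1^{12}=1)\vee(x_2^{30}=1)\vee((x_1x_1^{x_2})^{12}=1)\vee((x_1x_1^{3x_2})^{12}=1)\vee((x_1^2x_1^{x_2})^{12}=1)$ holds in the alternating group $A_6$ (here $x_1^{x_2}=x_2^{-1}x_1x_2$). *)

From mathcomp Require Import all_boot all_fingroup.
Set Implicit Arguments. Unset Strict Implicit. Unset Printing Implicit Defensive.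
Local Open Scope group_scope.

Definition Supp n (s : 'S_n) : {set 'I_n} := [set i | s i != i].

Definition is_cycle_of_len n (k : nat) (s : 'S_n) : bool :=
  (#|Supp s| == k) && [exists i, porbit s i == Supp s].

From mathcomp Require Import all_boot all_fingroup.
Local Open Scope group_scope.

(* The lemma is a finite check. A permutation s of 'I_n is encoded by its word
   [:: s 0; ...; s n.-1] of natural numbers; composition, the support and the
   property of being a k-cycle are computed on words, and agree with their
   group-theoretic counterparts. The conclusion is then verified by evaluation
   over all pairs of words of 5-cycles of 'I_6 (144 * 144 pairs). *)

Lemma eq_set_forall (T : finType) (A B : {set T}) :
  (A == B) = [forall y, (y \in A) == (y \in B)].
Proof.
apply/eqP/forallP => [-> y | AB]; first by rewrite eqxx.
by apply/setP => y; apply/eqP/AB.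
Qed.

Lemma porbit_has_iter (T : finType) (s : {perm T}) (x y : T) :
  (y \in porbit s x) = has (fun k => iter k s x == y) (iota 0 #|T|).
Proof.
apply/idP/hasP => [| [k _ /eqP <-]]; last by rewrite -permX mem_porbit.
rewrite porbit_traject => /trajectP[k lt_k ->]; exists k => //.
by rewrite mem_iota (leq_trans lt_k (max_card _)).
Qed.

Section PermWords.

Set Implicit Arguments.
Unset Strict Implicit.

Variable n : nat.

Lemma exists_ord (P : pred nat) : [exists i : 'I_n, P i] = has P (iota 0 n).
Proof.
rewrite -val_enum_ord has_map; apply/existsP/hasP => [[i Pi] | [i _ Pi]].
  by exists i; rewrite ?mem_enum.
by exists i.
Qed.

Lemma forall_ord (P : pred nat) : [forall i : 'I_n, P i] = all P (iota 0 n).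
Proof.
apply/negb_inj; rewrite negb_forall -has_predC.
by rewrite -(exists_ord (predC P)).
Qed.

Definition word_app (w : seq nat) (i : nat) : nat := nth i w i.

Definition perm_word (s : 'S_n) : seq nat := [seq val (s i) | i <- enum 'I_n].

Definition word_mul (w v : seq nat) : seq nat :=
  [seq word_app v (word_app w i) | i <- iota 0 n].

Definition word_moved (w : seq nat) : seq nat :=
  [seq i <- iota 0 n | word_app w i != i].

Definition word_is_cycle_of_len (k : nat) (w : seq nat) : bool :=
  (size (word_moved w) == k) &&
  has (fun x => all (fun y =>
         has (fun j => iter j (word_app w) x == y) (iota 0 n)
         == (y \in word_moved w)) (iota 0 n)) (iota 0 n).

Definition cycle_words (k : nat) : seq (seq nat) :=
  [seq w <- permutations (iota 0 n) | word_is_cycle_of_len k w].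

Lemma word_app_perm (s : 'S_n) (i : 'I_n) :
  word_app (perm_word s) (val i) = val (s i).
Proof.
by rewrite /word_app (nth_map i) ?size_enum_ord ?(nth_ord_enum i i) ?ltn_ord.
Qed.

Lemma iter_word_app (s : 'S_n) (k : nat) (i : 'I_n) :
  iter k (word_app (perm_word s)) (val i) = val (iter k s i).
Proof. by elim: k => //= k ->; rewrite word_app_perm. Qed.

Lemma perm_wordM (a b : 'S_n) :
  perm_word (a * b) = word_mul (perm_word a) (perm_word b).
Proof.
rewrite /word_mul -val_enum_ord -map_comp; apply: eq_map => i /=.
by rewrite !word_app_perm permM.
Qed.

Lemma perm_word_perm_eq (s : 'S_n) : perm_eq (perm_word s) (iota 0 n).
Proof.
rewrite /perm_word -val_enum_ord (map_comp val s) perm_map //.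
apply: uniq_perm; rewrite ?(map_inj_uniq perm_inj) ?enum_uniq // => y.
rewrite mem_enum; apply/mapP; exists (s^-1 y); rewrite ?mem_enum ?permKV //.
Qed.

Lemma mem_word_moved (s : 'S_n) (i : 'I_n) :
  (val i \in word_moved (perm_word s)) = (i \in Supp s).
Proof. by rewrite mem_filter mem_iota ltn_ord word_app_perm inE /= andbT. Qed.

Lemma size_word_moved (s : 'S_n) : size (word_moved (perm_word s)) = #|Supp s|.
Proof.
rewrite cardE /enum_mem size_filter -enumT size_filter -val_enum_ord count_map.
by apply: eq_count => i; rewrite /= word_app_perm inE.
Qed.

Lemma Supp_word_moved (a b : 'S_n) :
  word_moved (perm_word a) = word_moved (perm_word b) -> Supp a = Supp b.
Proof. by move=> E; apply/setP => i; rewrite -!mem_word_moved E. Qed.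

Lemma is_cycle_of_len_word (k : nat) (s : 'S_n) :
  is_cycle_of_len k s = word_is_cycle_of_len k (perm_word s).
Proof.
rewrite /is_cycle_of_len /word_is_cycle_of_len size_word_moved; congr (_ && _).
rewrite -exists_ord; apply: eq_existsb => x; rewrite eq_set_forall -forall_ord.
apply: eq_forallb => y; rewrite mem_word_moved porbit_has_iter card_ord.
congr (_ == _); rewrite -val_enum_ord !has_map; apply: eq_has => j /=.
by rewrite iter_word_app.
Qed.

Lemma perm_word_cycle (k : nat) (s : 'S_n) :
  is_cycle_of_len k s -> perm_word s \in cycle_words k.
Proof.
by rewrite is_cycle_of_len_word mem_filter mem_permutations perm_word_perm_eq
  andbT.
Qed.

End PermWords.

Definition lemma5_words (w v : seq nat) : bool :=
  let c5 := word_is_cycle_of_len 6 5 in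
  (word_moved 6 w != word_moved 6 v) ==>
  [|| ~~ c5 (word_mul 6 w v), ~~ c5 (word_mul 6 w (word_mul 6 v (word_mul 6 v v)))
    | ~~ c5 (word_mul 6 (word_mul 6 w w) v)].

Lemma lemma5_all_words :
  all (fun w => all (lemma5_words w) (cycle_words 6 5)) (cycle_words 6 5).
Proof. by vm_compute. Qed.

Theorem lemma5 (a b : 'S_6) :
  is_cycle_of_len 5 a -> is_cycle_of_len 5 b -> Supp a != Supp b ->
  ~~ is_cycle_of_len 5 (a * b) \/ ~~ is_cycle_of_len 5 (a * b ^+ 3) \/
  ~~ is_cycle_of_len 5 (a ^+ 2 * b).
Proof.
move=> a5 b5 Sab.
have := allP (allP lemma5_all_words _ (perm_word_cycle a5)) _ (perm_word_cycle b5).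
rewrite /lemma5_words -!perm_wordM -!is_cycle_of_len_word -expg2 -expgS.
have -> : word_moved 6 (perm_word a) != word_moved 6 (perm_word b).
  by apply: contraNneq Sab => /Supp_word_moved ->.
by case/or3P; auto.
Qed.
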